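(* Let $\Omega$ be a measurable space with reference measure $\mathrm{d}\mathbf{y}$, let $q$ be a probability density on $\Omega$, and let $f_{\bm{\theta}}:\Omega\to\mathbb{R}$, $\bm{\theta}\in\Theta$, satisfy $|f_{\bm{\theta}}(\mathbf{y})-\log q(\mathbf{y})|\le C$ for all $\mathbf{y}\in\Omega$ and all $\bm{\theta}\in\Theta$. Fix data $\mathbf{y}_1,\ldots,\mathbf{y}_n\in\Omega$, an integer $m\ge1$ and reference points $\bm{r}_1,\ldots,\bm{r}_m\in\Omega$, and define $$\mathcal{M}(\bm{\theta},\nu)=\sum_{i=1}^n\{f_{\bm{\theta}}(\mathbf{y}_i)+\nu\}-n\int_\Omega\exp\{f_{\bm{\theta}}(\mathbf{y})+\nu\}\,\mathrm{d}\mathbf{y},$$ $$\mathcal{R}^m(\bm{\theta},\nu)=\sum_{i=1}^n\log\left[\frac{n\exp\{f_{\bm{\theta}}(\mathbf{y}_i)+\nu\}}{n\exp\{f_{\bm{\theta}}(\mathbf{y}_i)+\nu\}+mq(\mathbf{y}_i)}\right]+\sum_{j=1}^m\log\left[\frac{mq(\bm{r}_j)}{n\exp\{f_{\bm{\theta}}(\bm{r}_j)+\nu\}+mq(\bm{r}_j)}\right].$$ Then there exists a bounded interval $I\subset\mathbb{R}$ such that, for every $\bm{\theta}\in\Theta$, the maximum of both functions $\nu\mapsto\mathcal{M}(\bm{\theta},\nu)$ and $\nu\mapsto\mathcal{R}^m(\bm{\theta},\nu)$ is attained in $I$. *)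

From HB Require Import structures.
From mathcomp Require Import all_boot all_order all_algebra.
From mathcomp Require Import all_classical all_reals all_analysis.
Set Implicit Arguments. Unset Strict Implicit. Unset Printing Implicit Defensive.
Import Order.TTheory GRing.Theory Num.Theory.
Local Open Scope ring_scope.

Definition Mobj {d} {T : measurableType d} {R : realType}
  (mu : {measure set T -> \bar R}) (g : T -> R) (n : nat) (ys : 'I_n -> T)
  (nu : R) : \bar R :=
  ((\sum_(i < n) (g (ys i) + nu))%:E
   - (n%:R)%:E * \int[mu]_(y in setT) (expR (g y + nu))%:E)%E.

Definition Rmobj {T : Type} {R : realType} (q : T -> R) (g : T -> R)
  (n : nat) (ys : 'I_n -> T) (m : nat) (rs : 'I_m -> T) (nu : R) : R :=
  \sum_(i < n) ln (n%:R * expR (g (ys i) + nu)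
                    / (n%:R * expR (g (ys i) + nu) + m%:R * q (ys i)))
  + \sum_(j < m) ln (m%:R * q (rs j)
                    / (n%:R * expR (g (rs j) + nu) + m%:R * q (rs j))).

(* Since |f - ln q| <= C, the density exp(f + nu) is pinched between
   q exp(nu - C) and q exp(nu + C).  For M the integral is therefore
   exp(nu) Z with Z in [exp(-C), exp(C)], and the concave function
   n (nu - exp(nu) Z) peaks at nu = - ln Z in [-C, C].  For R^m every summand
   is the logarithm of a number in (0, 1), hence nonpositive, and the
   pinching gives R^m(theta, 0) >= -K with K independent of theta.  Far to the
   right the term of the reference point r_1 alone, and far to the left the
   term of the data point y_1 alone, drops below -K; by continuity and the
   extreme value theorem the maximum is attained in between. *)

From HB Require Import structures.
From mathcomp Require Import all_boot all_order all_algebra.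
From mathcomp Require Import all_classical all_reals all_analysis.
From mathcomp Require Import lra measurable_realfun.
Set Implicit Arguments. Unset Strict Implicit. Unset Printing Implicit Defensive.
Import Order.TTheory GRing.Theory Num.Theory numFieldNormedType.Exports.
Local Open Scope ring_scope.

Section RealFacts.
Variable R : realType.
Implicit Types (a b c k x y z C Q g : R) (u v phi : R -> R).

Lemma expR_bounds_of_ln_dist C Q g : 0 < Q -> `|g - ln Q| <= C ->
  expR (- C) * Q <= expR g <= expR C * Q.
Proof.
move=> Q0; rewrite ler_norml => /andP[? ?].
by rewrite -(lnK Q0) -!expRD !ler_expR; apply/andP; split; lra.
Qed.

Lemma ln_ratio_le0 x y : 0 < x -> 0 <= y -> ln (x / (x + y)) <= 0.
Proof. by move=> x0 y0; apply: ln_le0; rewrite ler_pdivrMr; lra. Qed.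

Lemma ln_ratio_le_lnB x y : 0 < x -> 0 < y -> ln (x / (x + y)) <= ln x - ln y.
Proof.
move=> x0 y0; rewrite -ln_div ?posrE // ler_ln ?posrE ?divr_gt0 ?addr_gt0 //.
by rewrite ler_pM2l // lef_pV2 ?posrE ?addr_gt0 // lerDr ltW.
Qed.

Lemma ln_ratio_ge k x y : 0 < x -> 0 <= y -> y <= k * x ->
  - ln (1 + k) <= ln (x / (x + y)).
Proof.
move=> x0 y0 ykx; have k0 : 0 <= k by nra.
rewrite -lnV ?posrE; last lra.
rewrite ler_ln ?posrE ?invr_gt0 ?divr_gt0; try lra.
rewrite -[x / _]invrK invf_div lef_pV2 ?posrE ?divr_gt0; try lra.
by rewrite ler_pdivrMr //; lra.
Qed.

Lemma sub_expR_mul_le z x : 0 < z -> x - expR x * z <= - ln z - expR (- ln z) * z.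
Proof.
move=> z0; rewrite expRN lnK ?posrE // mulVf ?gt_eqF //.
by have := expR_ge1Dx (x + ln z); rewrite expRD lnK ?posrE //; lra.
Qed.

Lemma sumr_le_nonpos_term (k : nat) (F : 'I_k -> R) (i : 'I_k) :
  (forall j, F j <= 0) -> \sum_(j < k) F j <= F i.
Proof. by move=> F0; rewrite (bigD1 i) //= gerDl sumr_le0. Qed.

Lemma continuous_sum (k : nat) (F : 'I_k -> R -> R) :
  (forall i, continuous (F i)) -> continuous (fun x => \sum_(i < k) F i x).
Proof.
elim: k F => [|k IH] F cF.
  by under eq_fun do rewrite big_ord0; exact: cst_continuous.
under eq_fun do rewrite big_ord_recr /=.
by move=> x; apply: (@continuousD _ R^o); [exact: IH | exact: cF].
Qed.

Lemma continuous_mulr_expRD a c : continuous (fun x => a * expR (c + x)).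
Proof.
move=> x; apply: (@continuousM _ _ (fun=> a) (fun x => expR (c + x)));
  first exact: cst_continuous.
apply: (continuous_comp (f := fun x => c + x)); last exact: continuous_expR.
by apply: (@continuousD _ R^o); [exact: cst_continuous | exact: cvg_id].
Qed.

Lemma continuous_ln_ratio u v : continuous u -> continuous v ->
  (forall x, 0 < u x) -> (forall x, 0 < v x) -> continuous (fun x => ln (u x / v x)).
Proof.
move=> cu cv u0 v0 x.
apply: (continuous_comp (f := fun x => u x / v x)); last first.
  by apply: continuous_ln; rewrite divr_gt0.
apply: (@continuousM _ _ u (fun x => (v x)^-1) x (cu x)).
by apply: (@continuousV _ _ v x); [rewrite gt_eqF | exact: cv].
Qed.

Lemma continuous_argmax_itv phi a b p : continuous phi -> a <= p <= b ->
  (forall x, x < a -> phi x <= phi p) -> (forall x, b < x -> phi x <= phi p) ->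
  exists2 c, a <= c <= b & forall x, phi x <= phi c.
Proof.
move=> cphi /andP[ap pb] phi_lt phi_gt.
have [c cab cmax] := @EVT_max R phi a b (le_trans ap pb) (continuous_subspaceT cphi).
have pc : phi p <= phi c by apply: cmax; rewrite in_itv /= ap pb.
exists c; first by move: cab; rewrite in_itv.
move=> x; have [xa|ax] := ltP x a; first exact: le_trans (phi_lt _ xa) pc.
have [bx|xb] := ltP b x; first exact: le_trans (phi_gt _ bx) pc.
by apply: cmax; rewrite in_itv /= ax xb.
Qed.

End RealFacts.

(* R^m(theta, 0) >= - nce_gap n m C for every theta, and beyond nce_radius n m C
   a single summand of R^m already falls below that bound. *)
Definition nce_gap (R : realType) (n m : nat) (C : R) : R :=
  n%:R * ln (1 + m%:R * expR C) + m%:R * ln (1 + n%:R * expR C).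

Definition nce_radius (R : realType) (n m : nat) (C : R) : R :=
  ln n%:R + ln m%:R + C + nce_gap n m C.

Lemma nce_gap_ge0 (R : realType) (n m : nat) (C : R) :
  0 <= C -> 0 <= nce_gap n m C.
Proof.
by move=> C0; rewrite addr_ge0 // mulr_ge0 // ln_ge0 // lerDl mulr_ge0 ?expR_ge0.
Qed.

Lemma le_nce_radius (R : realType) (n m : nat) (C : R) :
  0 <= C -> C <= nce_radius n.+1 m.+1 C.
Proof.
move=> C0; have := nce_gap_ge0 n.+1 m.+1 C0.
have : 0 <= ln (n.+1%:R : R) by rewrite ln_ge0 ?ler1n.
have : 0 <= ln (m.+1%:R : R) by rewrite ln_ge0 ?ler1n.
by rewrite /nce_radius; lra.
Qed.

Section NoiseContrastiveObjective.
Variables (R : realType) (T : Type) (q g : T -> R) (C : R).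
Hypothesis q_gt0 : forall y, 0 < q y.
Hypothesis g_near_lnq : forall y, `|g y - ln (q y)| <= C.
Variables (n m : nat) (ys : 'I_n.+1 -> T) (rs : 'I_m.+1 -> T).

Local Notation N := (n.+1%:R : R).
Local Notation M := (m.+1%:R : R).

Definition data_term (nu : R) (y : T) : R :=
  ln (N * expR (g y + nu) / (N * expR (g y + nu) + M * q y)).

Definition ref_term (nu : R) (r : T) : R :=
  ln (M * q r / (N * expR (g r + nu) + M * q r)).

Lemma RmobjE nu :
  Rmobj q g ys rs nu = \sum_i data_term nu (ys i) + \sum_j ref_term nu (rs j).
Proof. by []. Qed.

Let N_ge1 : 1 <= N. Proof. by rewrite ler1n. Qed.
Let M_ge1 : 1 <= M. Proof. by rewrite ler1n. Qed.
Let Nexp_gt0 nu y : 0 < N * expR (g y + nu).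
Proof. by rewrite mulr_gt0 ?expR_gt0 //; lra. Qed.
Let Mq_gt0 y : 0 < M * q y.
Proof. by rewrite mulr_gt0 //; lra. Qed.
Let lnNexp nu y : ln (N * expR (g y + nu)) = ln N + g y + nu.
Proof. by rewrite lnM ?posrE ?expR_gt0 ?expRK ?addrA //; lra. Qed.
Let C_ge0 : 0 <= C. Proof. exact: le_trans (g_near_lnq (ys ord0)). Qed.
Let lnMq y : ln (M * q y) = ln M + ln (q y).
Proof. by rewrite lnM ?posrE //; lra. Qed.

Lemma data_term_le0 nu y : data_term nu y <= 0.
Proof. exact: ln_ratio_le0 (Nexp_gt0 _ _) (ltW (Mq_gt0 _)). Qed.

Lemma ref_term_le0 nu r : ref_term nu r <= 0.
Proof.
rewrite /ref_term [_ * expR _ + _]addrC.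
exact: ln_ratio_le0 (Mq_gt0 _) (ltW (Nexp_gt0 _ _)).
Qed.

Lemma data_term_le nu y : data_term nu y <= ln N + C + nu.
Proof.
apply: le_trans (ln_ratio_le_lnB (Nexp_gt0 _ _) (Mq_gt0 _)) _.
have := g_near_lnq y; rewrite lnNexp lnMq ler_norml => /andP[_ ?].
have : 0 <= ln M by exact: ln_ge0.
lra.
Qed.

Lemma ref_term_le nu r : ref_term nu r <= ln M + C - nu.
Proof.
rewrite /ref_term [_ * expR _ + _]addrC.
apply: le_trans (ln_ratio_le_lnB (Mq_gt0 _) (Nexp_gt0 _ _)) _.
have := g_near_lnq r; rewrite lnNexp lnMq ler_norml => /andP[? _].
have : 0 <= ln N by exact: ln_ge0.
lra.
Qed.

Lemma data_term_ge_at0 y : - ln (1 + M * expR C) <= data_term 0 y.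
Proof.
apply: ln_ratio_ge (Nexp_gt0 _ _) (ltW (Mq_gt0 _)) _.
have /andP[lo _] := expR_bounds_of_ln_dist (q_gt0 y) (g_near_lnq y).
have eC : expR C * expR (- C) = 1 by rewrite -expRD subrr expR0.
have qy : q y <= expR C * expR (g y + 0).
  by rewrite addr0 -[q y]mul1r -eC -mulrA ler_wpM2l ?expR_ge0.
rewrite -mulrA ler_wpM2l ?ler0n //; apply: (le_trans qy).
by rewrite ler_wpM2l ?expR_ge0 // ler_peMl ?expR_ge0.
Qed.

Lemma ref_term_ge_at0 r : - ln (1 + N * expR C) <= ref_term 0 r.
Proof.
rewrite /ref_term [_ * expR _ + _]addrC.
apply: ln_ratio_ge (Mq_gt0 _) (ltW (Nexp_gt0 _ _)) _.
have /andP[_ hi] := expR_bounds_of_ln_dist (q_gt0 r) (g_near_lnq r).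
rewrite addr0 -mulrA ler_wpM2l ?ler0n //; apply: (le_trans hi).
by rewrite ler_wpM2l ?expR_ge0 // mulrC ler_peMr // ltW.
Qed.

Lemma Rmobj_ge_at0 : - nce_gap n.+1 m.+1 C <= Rmobj q g ys rs 0.
Proof.
have sum_const k (a : R) : \sum_(i < k) a = k%:R * a.
  by rewrite sumr_const card_ord mulr_natl.
rewrite RmobjE /nce_gap opprD -!mulrN -[N * - _]sum_const -[M * - _]sum_const.
by apply: lerD; apply: ler_sum => ? _; [exact: data_term_ge_at0 | exact: ref_term_ge_at0].
Qed.

Lemma Rmobj_le_gap_right nu : nce_radius n.+1 m.+1 C <= nu ->
  Rmobj q g ys rs nu <= - nce_gap n.+1 m.+1 C.
Proof.
rewrite /nce_radius => nu_ge; rewrite RmobjE -[X in _ <= X]add0r.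
apply: lerD; first by apply: sumr_le0 => i _; exact: data_term_le0.
apply: le_trans (sumr_le_nonpos_term ord0 (fun j => ref_term_le0 nu (rs j))) _.
apply: le_trans (ref_term_le _ _) _.
have : 0 <= ln N by exact: ln_ge0.
lra.
Qed.

Lemma Rmobj_le_gap_left nu : nu <= - nce_radius n.+1 m.+1 C ->
  Rmobj q g ys rs nu <= - nce_gap n.+1 m.+1 C.
Proof.
rewrite /nce_radius => nu_le; rewrite RmobjE -[X in _ <= X]addr0.
apply: lerD; last by apply: sumr_le0 => j _; exact: ref_term_le0.
apply: le_trans (sumr_le_nonpos_term ord0 (fun i => data_term_le0 nu (ys i))) _.
apply: le_trans (data_term_le _ _) _.
have : 0 <= ln M by exact: ln_ge0.
lra.
Qed.

Lemma continuous_Rmobj : continuous (Rmobj q g ys rs).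
Proof.
have cden c b : continuous (fun x => N * expR (c + x) + b).
  by move=> x; apply: (@continuousD _ R^o _ (fun x => N * expR (c + x)) (fun=> b));
    [exact: continuous_mulr_expRD | exact: cst_continuous].
move=> nu; rewrite /Rmobj; apply: (@continuousD _ R^o).
  apply: continuous_sum => i; apply: continuous_ln_ratio => // [|x].
  - exact: continuous_mulr_expRD.
  - by rewrite addr_gt0.
apply: continuous_sum => j; apply: continuous_ln_ratio => // [|x].
- exact: cst_continuous.
- by rewrite addr_gt0.
Qed.

Lemma Rmobj_argmax :
  exists2 nu : R, - nce_radius n.+1 m.+1 C <= nu <= nce_radius n.+1 m.+1 C &
    forall nu', Rmobj q g ys rs nu' <= Rmobj q g ys rs nu.
Proof.
have radius_ge0 := le_trans C_ge0 (le_nce_radius n m C_ge0).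
apply: (continuous_argmax_itv (p := 0) continuous_Rmobj).
- by rewrite oppr_le0 radius_ge0.
- by move=> nu /ltW/Rmobj_le_gap_left/le_trans; apply; exact: Rmobj_ge_at0.
- by move=> nu /ltW/Rmobj_le_gap_right/le_trans; apply; exact: Rmobj_ge_at0.
Qed.

End NoiseContrastiveObjective.

Section LikelihoodObjective.
Variables (d : measure_display) (T : measurableType d) (R : realType).
Variables (mu : {measure set T -> \bar R}) (q g : T -> R) (C : R).
Hypothesis q_meas : measurable_fun setT q.
Hypothesis q_gt0 : forall y, 0 < q y.
Hypothesis q_prob : (\int[mu]_(y in setT) (q y)%:E = 1)%E.
Hypothesis g_meas : measurable_fun setT g.
Hypothesis g_near_lnq : forall y, `|g y - ln (q y)| <= C.

Let expg_meas : measurable_fun setT (fun y => (expR (g y))%:E).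
Proof. by apply/measurable_EFinP; apply: measurableT_comp => //; exact: measurable_expR. Qed.

Let integral_scaled_q c : 0 <= c -> (\int[mu]_(y in setT) (c * q y)%:E = c%:E)%E.
Proof.
move=> c0; under eq_integral do rewrite EFinM.
rewrite ge0_integralZl //; first by rewrite q_prob mule1.
- by apply/measurable_EFinP.
- by move=> y _; rewrite lee_fin ltW.
Qed.

Lemma integral_expR_bounds : exists2 z : R,
  (\int[mu]_(y in setT) (expR (g y))%:E = z%:E)%E & expR (- C) <= z <= expR C.
Proof.
have scaled_q_meas c : measurable_fun setT (fun y => (c * q y)%:E).
  by apply/measurable_EFinP; exact: measurable_funM.
have [lo hi] : ((expR (- C))%:E <= \int[mu]_(y in setT) (expR (g y))%:E)%E /\
               (\int[mu]_(y in setT) (expR (g y))%:E <= (expR C)%:E)%E.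
  rewrite -!integral_scaled_q ?expR_ge0 //; split;
    apply: ge0_le_integral => // y _;
    rewrite ?lee_fin ?mulr_ge0 ?expR_ge0 ?(ltW (q_gt0 y)) //;
    by have /andP[] := expR_bounds_of_ln_dist (q_gt0 y) (g_near_lnq y).
move: lo hi; case: (\int[mu]_(y in setT) _)%E => // z lo hi.
by exists z; rewrite -?lee_fin ?lo.
Qed.

Variables (n : nat) (ys : 'I_n -> T).

Lemma Mobj_argmax : exists2 nu : R, - C <= nu <= C &
  forall nu', (Mobj mu g ys nu' <= Mobj mu g ys nu)%E.
Proof.
have [z Zz /andP[zlo zhi]] := integral_expR_bounds.
have z_gt0 : 0 < z by exact: lt_le_trans (expR_gt0 _) zlo.
have MobjE nu :
    Mobj mu g ys nu = (\sum_i g (ys i) + n%:R * (nu - expR nu * z))%:E.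
  rewrite /Mobj; under eq_integral do rewrite expRD mulrC EFinM.
  rewrite ge0_integralZl ?expR_ge0 // Zz -EFinM -EFinB big_split /=.
  by rewrite sumr_const card_ord mulrBr !mulr_natl addrA.
exists (- ln z).
  have lnz_le : ln z <= C by rewrite -ler_expR lnK.
  have lnz_ge : - C <= ln z by rewrite -ler_expR lnK.
  by apply/andP; split; lra.
by move=> nu'; rewrite !MobjE lee_fin lerD2l ler_wpM2l ?ler0n ?sub_expR_mul_le.
Qed.

End LikelihoodObjective.

Theorem lemma1 (d : measure_display) (T : measurableType d) (R : realType)
  (mu : {measure set T -> \bar R}) (q : T -> R)
  (q_meas : measurable_fun setT q)
  (q_pos : forall y : T, 0 < q y)
  (q_prob : (\int[mu]_(y in setT) (q y)%:E = 1)%E)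
  (Theta : Type) (f : Theta -> T -> R) (C : R)
  (f_meas : forall th : Theta, measurable_fun setT (f th))
  (f_bound : forall (th : Theta) (y : T), `|f th y - ln (q y)| <= C)
  (n : nat) (ys : 'I_n -> T) (m : nat) (m_ge1 : (1 <= m)%N) (rs : 'I_m -> T) :
  exists a b : R,
    forall th : Theta,
      (exists2 nu : R, a <= nu <= b &
         forall nu' : R, (Mobj mu (f th) ys nu' <= Mobj mu (f th) ys nu)%E)
      /\
      (exists2 nu : R, a <= nu <= b &
         forall nu' : R, Rmobj q (f th) ys rs nu' <= Rmobj q (f th) ys rs nu).
Proof.
case: n ys => [|n] ys.
  exists 0, 0 => th; split; exists 0; rewrite ?lexx // => nu'.
    by rewrite /Mobj !big_ord0 !mul0e.
  suff -> : Rmobj q (f th) ys rs nu' = Rmobj q (f th) ys rs 0 by [].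
  by rewrite /Rmobj !big_ord0; congr (_ + _); apply: eq_bigr => j _; rewrite !mul0r.
case: m m_ge1 rs => [|m] // _ rs.
exists (- nce_radius n.+1 m.+1 C), (nce_radius n.+1 m.+1 C) => th; split.
  have [nu /andP[nu_lo nu_hi] nu_max] :=
    Mobj_argmax q_meas q_pos q_prob (f_meas th) (f_bound th) ys.
  have := le_nce_radius n m (le_trans (normr_ge0 _) (f_bound th (ys ord0))).
  by exists nu => //; apply/andP; split; lra.
by have [nu nu_in nu_max] := Rmobj_argmax q_pos (f_bound th) ys rs; exists nu.
Qed.
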